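(* Let $L=\mathbb{Z}v$ be a one-dimensional lattice with $v\in\mathbb{R}_{>0}$, and assume $b\ge3v+1$. Then two elements chosen independently and uniformly at random from $L\cap[0,b)$ generate $L$ with probability greater than $\frac{3^3}{\pi^22^3}>\frac13$. *)

From HB Require Import structures.
From mathcomp Require Import all_boot all_order all_algebra.
From mathcomp Require Import all_classical all_reals all_analysis.
Set Implicit Arguments. Unset Strict Implicit. Unset Printing Implicit Defensive.
Import Order.TTheory GRing.Theory Num.Theory.
Local Open Scope ring_scope.

Definition in_lattice1 (R : realType) (v x : R) : Prop :=
  exists m : int, x = m%:~R * v.

Definition generates_lattice1 (R : realType) (v a c : R) : Prop :=
  forall z : R, in_lattice1 v z <-> exists x y : int, z = x%:~R * a + y%:~R * c.

Definition n_gen_pairs (R : realType) (v : R) (n : nat) (pts : 'I_n -> R) : nat :=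
  \sum_(p : 'I_n * 'I_n) (if `[< generates_lattice1 v (pts p.1) (pts p.2) >] then 1 else 0)%N.

From HB Require Import structures.
From mathcomp Require Import all_boot all_order all_algebra.
From mathcomp Require Import all_classical all_reals all_analysis.
From mathcomp Require Import ring lra zify.
Set Implicit Arguments. Unset Strict Implicit. Unset Printing Implicit Defensive.
Import Order.TTheory GRing.Theory Num.Theory.
Import numFieldNormedType.Exports.

(* The lattice points in [0, b) are 0, v, ..., (n - 1) v with n >= 2, and by Bezout
   (a v, c v) generates Z v as soon as gcd (a, c) = 1, so it suffices to count coprime
   pairs in {0, ..., n - 1}^2.  Two positive integers <= M that are not coprime share a
   prime divisor, which is 2, 3 or some 2k + 1 with k >= 2; hence there are at most
   M^2 (1/4 + 1/9 + sum_(k >= 2) 1/(2k + 1)^2) <= 35/72 M^2 such pairs, and together with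
   (0, 1) and (1, 0) this leaves more than 3/8 n^2 coprime pairs.  Finally
   3/8 > 27/(8 pi^2) > 1/3 because 3 < pi < 3.18, which follows from the signs of cos at
   3/2 and 1.59, read off alternating truncations of its Taylor series. *)

Definition dvdn_both (d a b : nat) : nat := (d %| a) * (d %| b).

Lemma sum_dvdn_both M d :
  \sum_(1 <= a < M.+1) \sum_(1 <= b < M.+1) dvdn_both d a b = (M %/ d) ^ 2.
Proof.
rewrite -mulnn divn_count_dvd big_distrl /=; apply: eq_bigr => a _.
by rewrite big_distrr.
Qed.

Lemma not_coprime_prime_dvd a b : 0 < a -> ~~ coprime a b ->
  exists p, [/\ prime p, p %| a & p %| b].
Proof.
move=> a_gt0 not_co; exists (pdiv (gcdn a b)); split.
- by apply: pdiv_prime; rewrite ltn_neqAle eq_sym not_co gcdn_gt0 a_gt0.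
- exact: dvdn_trans (pdiv_dvd _) (dvdn_gcdl _ _).
- exact: dvdn_trans (pdiv_dvd _) (dvdn_gcdr _ _).
Qed.

Lemma prime_eq2_eq3_or_odd p : prime p ->
  [\/ p = 2, p = 3 | exists2 k, 2 <= k & p = k.*2.+1].
Proof.
move=> p_pr; have [<-|p_odd] := even_prime p_pr; first exact: Or31.
have [->|p_neq3] := eqVneq p 3; first exact: Or32.
apply: Or33; exists p./2; last by rewrite -[LHS]odd_double_half p_odd.
have := prime_gt1 p_pr; move: p_neq3; rewrite -[p]odd_double_half p_odd.
by case: p./2 => [|[|]].
Qed.

Lemma not_coprime_le_dvdn_both M a b : 0 < a <= M ->
  ~~ coprime a b <=
    dvdn_both 2 a b + dvdn_both 3 a b + \sum_(2 <= k < M) dvdn_both k.*2.+1 a b.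
Proof.
move=> /andP[a_gt0 a_le]; case: (boolP (coprime a b)) => //= not_co.
have [p [p_pr pa pb]] := not_coprime_prime_dvd a_gt0 not_co.
have p_both : dvdn_both p a b = 1 by rewrite /dvdn_both pa pb.
have p_le : p <= M := leq_trans (dvdn_leq a_gt0 pa) a_le.
case: (prime_eq2_eq3_or_odd p_pr) => [p2|p3|[k k_ge p_eq]].
- by rewrite -p2 p_both -addnA leq_addr.
- by rewrite -p3 p_both addnAC leq_addl.
have k_lt : k < M by lia.
rewrite (bigD1_seq k) ?iota_uniq ?mem_index_iota ?k_ge //= -p_eq p_both.
lia.
Qed.

Lemma sum_not_coprime_le M :
  \sum_(1 <= a < M.+1) \sum_(1 <= b < M.+1) ~~ coprime a b <=
  (M %/ 2) ^ 2 + (M %/ 3) ^ 2 + \sum_(2 <= k < M) (M %/ k.*2.+1) ^ 2.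
Proof.
have -> : \sum_(2 <= k < M) (M %/ k.*2.+1) ^ 2 = \sum_(1 <= a < M.+1)
    \sum_(1 <= b < M.+1) \sum_(2 <= k < M) dvdn_both k.*2.+1 a b.
  under eq_bigr do rewrite -sum_dvdn_both.
  by rewrite exchange_big_nat; apply: eq_bigr => a _; rewrite exchange_big_nat.
rewrite -!sum_dvdn_both -!big_split big_seq [X in _ <= X]big_seq.
apply: leq_sum => a; rewrite mem_index_iota => ha.
rewrite -!big_split; apply: leq_sum => b _.
by apply: not_coprime_le_dvdn_both; lia.
Qed.

Lemma sum_coprime_ord_ge M : 0 < M ->
  2 + \sum_(1 <= a < M.+1) \sum_(1 <= b < M.+1) coprime a b <=
  \sum_(p : 'I_M.+1 * 'I_M.+1) coprime p.1 p.2.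
Proof.
move=> M_gt0.
have -> : \sum_(p : 'I_M.+1 * 'I_M.+1) coprime p.1 p.2 =
    \sum_(0 <= a < M.+1) \sum_(0 <= b < M.+1) coprime a b.
  rewrite big_mkord; under [RHS]eq_bigr do rewrite big_mkord.
  exact: esym (pair_bigA _ (fun a b : 'I_M.+1 => coprime a b : nat)).
rewrite [X in _ <= X]big_ltn //.
under [X in _ <= _ + X]eq_bigr do rewrite big_ltn //.
rewrite big_split /= addnA leq_add2r.
have row0 : 1 <= \sum_(0 <= b < M.+1) coprime 0 b by rewrite big_ltn // big_ltn.
have col0 : 1 <= \sum_(1 <= a < M.+1) coprime a 0 by rewrite big_ltn // coprime1n.
exact: leq_add row0 col0.
Qed.

Lemma sum_coprime_add_not_coprime M :
  \sum_(1 <= a < M.+1) \sum_(1 <= b < M.+1) coprime a b +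
  \sum_(1 <= a < M.+1) \sum_(1 <= b < M.+1) ~~ coprime a b = M ^ 2.
Proof.
rewrite -big_split (eq_bigr (fun _ => M)) => [|a _].
  by rewrite sum_nat_const_nat subSS subn0 mulnn.
rewrite -big_split (eq_bigr (fun _ => 1)) => [|b _]; last by case: coprime.
by rewrite sum_nat_const_nat subSS subn0 muln1.
Qed.

Local Open Scope ring_scope.

Lemma sqr_divn_le (R : realFieldType) M d : (0 < d)%N ->
  ((M %/ d) ^ 2)%:R <= M%:R ^+ 2 / d%:R ^+ 2 :> R.
Proof.
move=> d_gt0; rewrite natrX -expr_div_n lerXn2r ?nnegrE ?divr_ge0 //.
by rewrite ler_pdivlMr ?ltr0n // -natrM ler_nat leq_divM.
Qed.

Lemma sum_inv_sqr_odd_le (R : realFieldType) K :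
  \sum_(2 <= k < K) ((k.*2.+1)%:R ^+ 2)^-1 <= 8^-1 :> R.
Proof.
(* Telescoping: 1 / (2k + 1)^2 <= 1 / (4k(k + 1)) = 1 / (4k) - 1 / (4(k + 1)). *)
suff tele : forall J,
    \sum_(2 <= k < J.+2) ((k.*2.+1)%:R ^+ 2)^-1 <= 8^-1 - (4 * J.+2%:R)^-1 :> R.
  case: K => [|[|J]]; try by rewrite big_geq // invr_ge0.
  apply: le_trans (tele J) _; rewrite lerBlDr lerDl invr_ge0 mulr_ge0 //.
elim=> [|J IH]; first by rewrite big_nil; lra.
rewrite big_nat_recr //=.
have -> : (J.+2).*2.+1%:R = 2 * J.+2%:R + 1 :> R.
  by rewrite -muln2 -addn1 natrD natrM mulrC.
have -> : J.+3%:R = J.+2%:R + 1 :> R by rewrite -addn1 natrD.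
have x_ge2 : 2 <= J.+2%:R :> R by rewrite (ler_nat R 2).
move: (J.+2%:R : R) IH x_ge2 => x IH x_ge2.
suff : ((2 * x + 1) ^+ 2)^-1 <= (4 * x)^-1 - (4 * (x + 1))^-1 by lra.
have -> : (4 * x)^-1 - (4 * (x + 1))^-1 = (4 * x * (x + 1))^-1.
  by field; apply/andP; split; lra.
by rewrite lef_pV2 ?posrE ?exprn_gt0; nra.
Qed.

Lemma sum_sqr_divn_odd_le (R : realFieldType) M :
  (\sum_(2 <= k < M) (M %/ k.*2.+1) ^ 2)%:R <= M%:R ^+ 2 / 8 :> R.
Proof.
rewrite natr_sum (le_trans (ler_sum _ (fun k _ => sqr_divn_le R M (ltn0Sn k.*2)))) //.
rewrite -mulr_sumr ler_wpM2l ?sqr_ge0 //.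
exact: sum_inv_sqr_odd_le.
Qed.

Lemma coprime_pairs_gt N : (1 < N)%N ->
  (3 * N ^ 2 < 8 * \sum_(p : 'I_N * 'I_N) coprime p.1 p.2)%N.
Proof.
case: N => // M; rewrite ltnS => M_gt0.
set C := \sum_(p : _) _.
set D := \sum_(1 <= a < M.+1) \sum_(1 <= b < M.+1) (coprime a b : nat).
set E := \sum_(1 <= a < M.+1) \sum_(1 <= b < M.+1) (~~ coprime a b : nat).
have C_ge : 2 + D%:R <= C%:R :> rat.
  by rewrite -natrD ler_nat sum_coprime_ord_ge.
have DE : D%:R + E%:R = M%:R ^+ 2 :> rat.
  by rewrite -natrD -natrX sum_coprime_add_not_coprime.
have E_le : E%:R <= ((M %/ 2) ^ 2)%:R + ((M %/ 3) ^ 2)%:R +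
    (\sum_(2 <= k < M) (M %/ k.*2.+1) ^ 2)%:R :> rat.
  by rewrite -!natrD ler_nat sum_not_coprime_le.
have S_le := sum_sqr_divn_odd_le rat M.
have half_le := sqr_divn_le rat M (isT : 0 < 2)%N.
have third_le := sqr_divn_le rat M (isT : 0 < 3)%N.
rewrite -(ltr_nat rat) natrM natrX natrM -[M.+1]addn1 natrD.
have M_ge1 : 1 <= M%:R :> rat by rewrite (ler_nat rat 1).
move: (M%:R : rat) M_ge1 => m M_ge1 in DE S_le half_le third_le *.
(* The bounds give 8 C >= 16 + 37/9 m^2, and
   16 + 37/9 m^2 - 3 (m + 1)^2 = 10/9 (m - 27/10)^2 + 49/10. *)
have := sqr_ge0 (m - 27 / 10); nra.
Qed.

Lemma cos_term_succ_lt (R : realFieldType) (x : R) m : (0 < m)%N -> 0 < x -> x ^+ 2 <= 4 ->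
  x ^+ m.+1.*2 / m.+1.*2`!%:R < x ^+ m.*2 / m.*2`!%:R.
Proof.
move=> m_gt0 x_gt0 x_le4.
have fact_pos : 0 < m.*2`!%:R :> R by rewrite ltr0n fact_gt0.
have pow_gt0 : 0 < x ^+ m.*2 by rewrite exprn_gt0.
have step_gt4 : 4 < m.*2.+2%:R * m.*2.+1%:R :> R.
  by rewrite -natrM (ltr_nat R 4); rewrite -muln2; nia.
have -> : x ^+ m.+1.*2 / m.+1.*2`!%:R =
    x ^+ 2 / (m.*2.+2%:R * m.*2.+1%:R) * (x ^+ m.*2 / m.*2`!%:R).
  rewrite doubleS !factS !natrM -addn2 exprD; field.
  have m2_ge0 : 0 <= m.*2%:R :> R := ler0n _ _.
  by rewrite !gt_eqF //; lra.
by rewrite gtr_pMl ?divr_gt0 // ltr_pdivrMr ?mul1r; lra.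
Qed.

Section PiBounds.
Variable R : realType.

Lemma cos_coeff'_pair_gt0 (x : R) m : (0 < m)%N -> 0 < x -> x ^+ 2 <= 4 ->
  0 < (-1) ^+ m * (cos_coeff' x m + cos_coeff' x m.+1).
Proof.
move=> m_gt0 x_gt0 x_le4; rewrite /cos_coeff' -!exprnP exprS.
have -> : (-1) ^+ m * ((-1) ^+ m * x ^+ m.*2 / m.*2`!%:R +
      -1 * (-1) ^+ m * x ^+ m.+1.*2 / m.+1.*2`!%:R) =
    ((-1) ^+ m) ^+ 2 * (x ^+ m.*2 / m.*2`!%:R - x ^+ m.+1.*2 / m.+1.*2`!%:R).
  by ring.
by rewrite sqrr_sign mul1r subr_gt0 cos_term_succ_lt.
Qed.

Lemma cos_partial_sum_even_lt (x : R) k : (0 < k)%N -> 0 < x -> x ^+ 2 <= 4 ->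
  \sum_(0 <= i < k.*2) cos_coeff' x i < cos x.
Proof.
move=> k_gt0 x_gt0 x_le4; have cos_cvg := @cvg_cos_coeff' R x.
rewrite -(cvg_lim (@Rhausdorff R) cos_cvg).
apply: lt_sum_lim_series => [|d]; first by move/cvgP in cos_cvg.
have := @cos_coeff'_pair_gt0 x (k + d).*2; rewrite -signr_odd odd_double mul1r.
by rewrite addnS -doubleD; apply; rewrite ?double_gt0 ?addn_gt0 ?k_gt0.
Qed.

Lemma cos_lt_partial_sum_odd (x : R) k : 0 < x -> x ^+ 2 <= 4 ->
  cos x < \sum_(0 <= i < k.*2.+1) cos_coeff' x i.
Proof.
move=> x_gt0 x_le4; have /cvgN cos_cvg := @cvg_cos_coeff' R x.
rewrite -ltrN2 -(cvg_lim (@Rhausdorff R) cos_cvg) -sumrN -seriesN.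
apply: lt_sum_lim_series => [|d]; first by move/cvgP in cos_cvg; rewrite seriesN.
have := @cos_coeff'_pair_gt0 x (k + d).*2.+1.
rewrite -signr_odd /= odd_double expr1 mulN1r opprD.
by rewrite addnS addSn -doubleD; apply.
Qed.

Lemma cos_three_halves_gt0 : 0 < cos (3 / 2 : R).
Proof.
apply: le_lt_trans (@cos_partial_sum_even_lt _ 2 isT _ _); [|lra|rewrite expr2; lra].
rewrite /cos_coeff' !big_nat_recr //= big_nil -!exprnP.
rewrite !factS fact0 !natrM !exprS !expr0.
lra.
Qed.

Lemma cos_159_100_lt0 : cos (159 / 100 : R) < 0.
Proof.
apply: lt_le_trans (@cos_lt_partial_sum_odd _ 2 _ _) _; [lra|rewrite expr2; lra|].
rewrite /cos_coeff' !big_nat_recr //= big_nil -!exprnP.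
rewrite !factS fact0 !natrM !exprS !expr0.
lra.
Qed.

Lemma pi_gt3 : 3 < pi :> R.
Proof.
have pi_ge2 := @pi_ge2 R.
suff : 3 / 2 < pi / 2 :> R by lra.
rewrite -ltr_cos ?cos_pihalf ?cos_three_halves_gt0 // in_itv /=; lra.
Qed.

Lemma pi_lt_318_100 : pi < 318 / 100 :> R.
Proof.
have pi_ge2 := @pi_ge2 R.
suff : pi / 2 < 159 / 100 :> R by lra.
rewrite -ltr_cos ?cos_pihalf ?cos_159_100_lt0 // in_itv /=; lra.
Qed.

Lemma const_27_8pi2_lt_3_8 : 3 ^+ 3 / (pi ^+ 2 * 2 ^+ 3) < 3 / 8 :> R.
Proof.
rewrite ltr_pdivrMr ?mulr_gt0 ?exprn_gt0 ?pi_gt0 //.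
have := pi_gt3; nra.
Qed.

Lemma const_27_8pi2_gt_1_3 : 1 / 3 < 3 ^+ 3 / (pi ^+ 2 * 2 ^+ 3) :> R.
Proof.
rewrite ltr_pdivlMr ?mulr_gt0 ?exprn_gt0 ?pi_gt0 //.
have := pi_lt_318_100; have := @pi_gt0 R; nra.
Qed.

End PiBounds.

Lemma generates_lattice1_coprime (R : realType) (v : R) (a c : nat) : coprime a c ->
  generates_lattice1 v (a%:R * v) (c%:R * v).
Proof.
move=> co_ac z; split=> [[m ->]|[x [y ->]]]; last first.
  by exists (x * a%:Z + y * c%:Z); rewrite intrD !intrM /=; ring.
have [u [w uw]] := Bezoutz a c; rewrite /gcdz /= (eqP co_ac) in uw.
have /(congr1 (fun t : int => t%:~R : R)) := uw; rewrite intrD !intrM /= => uwR.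
exists (m * u), (m * w); rewrite !intrM.
transitivity (m%:~R * v * (u%:~R * a%:R + w%:~R * c%:R) : R); last by ring.
by rewrite uwR mulr1.
Qed.

Section LatticePoints.
Variables (R : realType) (v b : R) (n : nat) (pts : 'I_n -> R).
Hypotheses (v_gt0 : 0 < v) (v_lt_b : v < b) (pts_inj : injective pts).
Hypothesis pts_enum :
  forall x : R, (in_lattice1 v x /\ 0 <= x < b) <-> exists i : 'I_n, x = pts i.

Lemma pts_in_range i : in_lattice1 v (pts i) /\ 0 <= pts i < b.
Proof. exact/pts_enum/(ex_intro _ i erefl). Qed.

Lemma pts_nat_multiple i : exists k : nat, pts i == k%:R * v.
Proof.
have [[m ->] /andP[m_ge0 _]] := pts_in_range i.
have m_nneg : 0 <= m by move: m_ge0; rewrite pmulr_lge0 // ler0z.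
by exists `|m|%N; rewrite natr_absz ger0_norm.
Qed.

Let index i := xchoose (pts_nat_multiple i).

Lemma ptsE i : pts i = (index i)%:R * v.
Proof. exact/eqP/(xchooseP (pts_nat_multiple i)). Qed.

Lemma natr_mul_inj (j k : nat) : j%:R * v = k%:R * v -> j = k.
Proof. by move/(mulIf (lt0r_neq0 v_gt0))/eqP; rewrite eqr_nat => /eqP. Qed.

Lemma index_inj : injective index.
Proof. by move=> i j eq_ij; apply: pts_inj; rewrite !ptsE eq_ij. Qed.

Lemma index_lt i : (index i < n)%N.
Proof.
have [_ /andP[_ pts_i_lt]] := pts_in_range i.
have point (j : 'I_(index i).+1) : exists i' : 'I_n, pts i' == j%:R * v.
  have [|i' ->] := (pts_enum (j%:R * v)).1; last by exists i'.
  split; first by exists j; rewrite -pmulrn.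
  rewrite mulr_ge0 ?ler0n ?(ltW v_gt0) //=; apply: le_lt_trans pts_i_lt.
  by rewrite ptsE ler_pM2r // ler_nat -ltnS.
pose g j := xchoose (point j).
have g_inj : injective g.
  move=> j k /(congr1 pts); rewrite !(eqP (xchooseP (point _))).
  by move/natr_mul_inj/val_inj.
by have := leq_card g g_inj; rewrite !card_ord.
Qed.

Lemma n_gt1 : (1 < n)%N.
Proof.
have [|i v_eq] := (pts_enum v).1.
  by split; [exists 1; rewrite mul1r | rewrite ltW //= v_lt_b].
suff <- : index i = 1%N by exact: index_lt.
by apply: natr_mul_inj; rewrite -ptsE -v_eq mul1r.
Qed.

Lemma coprime_pairs_le_n_gen_pairs :
  (\sum_(p : 'I_n * 'I_n) coprime p.1 p.2 <= n_gen_pairs v pts)%N.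
Proof.
pose ord_index i := Ordinal (index_lt i).
pose h (p : 'I_n * 'I_n) := (ord_index p.1, ord_index p.2).
have h_inj : injective h.
  by move=> [p1 p2] [q1 q2] [/index_inj -> /index_inj ->].
rewrite (reindex_inj h_inj); apply: leq_sum => p _ /=.
case: (boolP (coprime _ _)) => //= co; rewrite asboolT // !ptsE.
exact: generates_lattice1_coprime.
Qed.

End LatticePoints.

Theorem lemma7p9 (R : realType) (v b : R) (hv : 0 < v) (hb : 3 * v + 1 <= b)
  (n : nat) (pts : 'I_n -> R) (hinj : injective pts)
  (henum : forall x : R, (in_lattice1 v x /\ 0 <= x < b) <-> exists i : 'I_n, x = pts i) :
  (n_gen_pairs v pts)%:R / (n ^ 2)%:R > 3 ^+ 3 / (pi ^+ 2 * 2 ^+ 3) :> R /\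
  3 ^+ 3 / (pi ^+ 2 * 2 ^+ 3) > 1 / 3 :> R.
Proof.
have v_lt_b : v < b by lra.
have n_gt1 := n_gt1 hv v_lt_b henum.
have gen_pairs_gt : (3 * n ^ 2 < 8 * n_gen_pairs v pts)%N.
  apply: leq_trans (coprime_pairs_gt n_gt1) _.
  by rewrite leq_mul2l (coprime_pairs_le_n_gen_pairs hv hinj henum) orbT.
split; last exact: const_27_8pi2_gt_1_3.
apply: lt_trans (const_27_8pi2_lt_3_8 R) _.
rewrite ltr_pdivlMr ?ltr0n ?expn_gt0 ?(ltn_trans _ n_gt1) //.
by move: gen_pairs_gt; rewrite -(ltr_nat R) !natrM; lra.
Qed.
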